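(* Let $G$ be a non-discrete, torsion-free locally compact abelian group. Then $G_{op}\neq 0$.
   Context: A subgroup $H$ of an abelian group $G$ is pure if $nH=H\cap nG$ for every positive integer $n$. For an LCA group $G$, $G_{op}$ (the $OP$ subgroup of $G$) denotes the intersection of all open pure subgroups of $G$. *)

From HB Require Import structures.
From mathcomp Require Import all_boot all_order all_algebra.
From mathcomp Require Import all_classical all_reals all_analysis.
Set Implicit Arguments. Unset Strict Implicit. Unset Printing Implicit Defensive.
Import GRing.Theory.
Local Open Scope classical_set_scope.
Local Open Scope ring_scope.

Definition is_subgroup (G : zmodType) (H : set G) : Prop :=
  H 0 /\ (forall x y, H x -> H y -> H (x - y)).

Definition mulset (G : zmodType) (n : nat) (H : set G) : set G :=
  [set x *+ n | x in H].

Definition pure_subgroup (G : zmodType) (H : set G) : Prop :=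
  is_subgroup H /\
  (forall n : nat, (0 < n)%N -> mulset n H = H `&` mulset n [set: G]).

Definition OP_subgroup (G : topologicalZmodType) : set G :=
  \bigcap_(H in [set H : set G | open H /\ pure_subgroup H]) H.

Definition torsion_free (G : zmodType) : Prop :=
  forall (x : G) (n : nat), (0 < n)%N -> x *+ n = 0 -> x = 0.

Definition discrete_topological (G : topologicalType) : Prop :=
  forall A : set G, open A.

Definition LCA (G : topologicalZmodType) : Prop :=
  hausdorff_space G /\ locally_compact [set: G].

Arguments OP_subgroup : clear implicits.
Arguments torsion_free : clear implicits.
Arguments discrete_topological : clear implicits.
Arguments LCA : clear implicits.

From HB Require Import structures.
From mathcomp Require Import all_boot all_order all_algebra.
From mathcomp Require Import all_classical all_reals all_analysis.
From mathcomp Require Import finmap.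
Local Open Scope classical_set_scope.
Local Open Scope ring_scope.
Import GRing.Theory.

Set Implicit Arguments.
Unset Strict Implicit.
Unset Printing Implicit Defensive.

(* Theorem: a non-discrete torsion-free LCA group G has G_op <> 0.
   Fix a compact closed neighbourhood V of 0 and an open neighbourhood W of 0
   with W + W <= V.  Two facts drive the proof.
   - Orbit lemma: if P is an open pure subgroup, then for M large enough every
     y with y, 2y, ..., My in V lies in P.  Indeed V is covered by finitely
     many cosets of P, so by pigeonhole some (j - i)y with 0 < j - i lies in
     P, and a pure subgroup of a torsion-free group is closed under roots.
   - Case split.  If some y <> 0 has all its multiples in V, the orbit lemma
     puts y in every open pure subgroup, so y is in G_op.  Otherwise, given
     finitely many open pure subgroups, pick y <> 0 (non-discreteness) whose
     first N multiples stay in W, N beyond all their thresholds; the first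
     multiple my leaving W still has all ky (k <= m) in V, hence my lies in
     each of them and in the compact shell V \ W.  These shell points meet
     the closed family of open pure subgroups finitely, so by compactness
     some nonzero point of V \ W lies in G_op. *)

Lemma pigeonhole (T : finType) (M : nat) (f : 'I_M.+1 -> T) : (#|T| <= M)%N ->
  exists i j : 'I_M.+1, (i < j)%N /\ f i = f j.
Proof.
move=> cardT; have /injectivePn [i [j neq_ij fij]] : ~~ injectiveb f.
  apply/negP => /injectiveP/leq_card; rewrite card_ord.
  by move/leq_trans/(_ cardT); rewrite ltnn.
case: (ltngtP i j) => [lt_ij|lt_ji|/val_inj eq_ij]; first by exists i, j.
  by exists j, i.
by rewrite eq_ij eqxx in neq_ij.
Qed.

(* First exit time: if y, ..., Ny lie in W but not all multiples of y do,
   the first multiple my outside W comes after N, and since W + W <= V all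
   of 0, y, ..., my lie in V. *)
Lemma first_exit (M : zmodType) (W V : set M) (y : M) (N : nat) :
  (forall x z, W x -> W z -> V (x + z)) -> (0 < N)%N ->
  (forall k, (k <= N)%N -> W (y *+ k)) -> ~ (forall k, W (y *+ k)) ->
  exists m, [/\ (N < m)%N, ~ W (y *+ m) & forall k, (k <= m)%N -> V (y *+ k)].
Proof.
move=> WWV N_gt0 Wle notWall.
have [|m /asboolPn notWm m_min] := ex_minnP (P := fun k => ~~ `[< W (y *+ k) >]).
  by apply: contrapT => allW; apply: notWall => k; apply: contrapT => notWk;
    apply: allW; exists k; apply/asboolPn.
have Wlt k : (k < m)%N -> W (y *+ k).
  move=> lt_km; apply: contrapT => notWk.
  by have := m_min k (introT (asboolPn _) notWk); rewrite leqNgt lt_km.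
have lt_Nm : (N < m)%N by rewrite ltnNge; apply/negP => /Wle.
have W0 : W 0 by rewrite -(mulr0n y); apply: Wle.
exists m; split => // k; rewrite leq_eqVlt => /orP [/eqP ->|/Wlt Wk]; last first.
  by rewrite -[y *+ k]addr0; apply: WWV.
have m_gt1 : (1 < m)%N := leq_ltn_trans N_gt0 lt_Nm.
rewrite -(prednK (ltnW m_gt1)) mulrSr; apply: WWV; last by rewrite -(mulr1n y); apply: Wlt.
by apply: Wlt; rewrite ltn_predL ltnW.
Qed.

Lemma compact_closed_nbhs (T : topologicalType) (x : T) :
  locally_compact [set: T] -> exists2 V : set T, nbhs x V & compact V /\ closed V.
Proof. by move=> lcT; have := lcT x I; rewrite withinET. Qed.

Section TopologicalAbelianGroup.
Variable G : topologicalZmodType.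
Implicit Types (P U V W : set G) (x y : G).

Lemma subgroupD P x y : is_subgroup P -> P x -> P y -> P (x + y).
Proof.
by move=> [P0 PB] Px Py; rewrite -[y]opprK -[- y]sub0r; exact/PB/PB.
Qed.

Lemma subgroupMn P x n : is_subgroup P -> P x -> P (x *+ n).
Proof.
move=> sP Px; elim: n => [|n IH]; first by rewrite mulr0n; case: sP.
by rewrite mulrS; apply: subgroupD.
Qed.

Definition root_closed P := forall n x, (0 < n)%N -> P (x *+ n) -> P x.

(* In a torsion-free group a pure subgroup is closed under roots: if nx = np
   with p in P then n(x - p) = 0, so x = p. *)
Lemma pure_root_closed P : torsion_free G -> pure_subgroup P -> root_closed P.
Proof.
move=> tf [sP pureP] n x n_gt0 Pxn.
have : (P `&` mulset n [set: G]) (x *+ n) by split=> //; exists x.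
rewrite -pureP // => -[p Pp pn_eq].
have : (x - p) *+ n = 0 by rewrite mulrnBl pn_eq subrr.
by move/(tf _ _ n_gt0)/eqP; rewrite subr_eq0 => /eqP ->.
Qed.

Lemma natmul_continuous n : continuous (fun x : G => x *+ n).
Proof.
elim: n => [|n IH] x.
  under eq_fun do rewrite mulr0n; exact: cvg_cst.
rewrite /continuous_at; under eq_fun do rewrite mulrS; rewrite mulrS.
apply: (@continuous_comp _ _ _ (fun x : G => (x, x *+ n)) (fun p : G * G => p.1 + p.2)).
  by apply: cvg_pair; [exact: cvg_id | exact: IH].
exact: add_continuous.
Qed.

Lemma nbhs0_translate a U : nbhs 0 U -> nbhs a [set x | U (x - a)].
Proof.
have sub_a : {for a, continuous (fun x : G => x - a)}.
  apply: (@continuous_comp _ _ _ (fun x : G => (x, a)) (fun p : G * G => p.1 - p.2)).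
    by apply: cvg_pair; [exact: cvg_id | exact: cvg_cst].
  exact: sub_continuous.
by move=> U0; apply: sub_a; rewrite /= subrr.
Qed.

(* An open subgroup is closed: its complement is a union of open cosets. *)
Lemma open_subgroup_closed P : is_subgroup P -> open P -> closed P.
Proof.
move=> sP oP; rewrite -(setCK P) closedC openE => b notPb; rewrite /interior /=.
have P0 : nbhs (0 : G) P by apply: open_nbhs_nbhs; split => //; case: sP.
apply: filterS (nbhs0_translate b P0) => x /= Pxb Px; apply: notPb.
by rewrite -(subKr x b); apply: (proj2 sP).
Qed.

(* In a non-discrete group every neighbourhood of 0 has a nonzero point,
   since otherwise {0}, hence every singleton, would be open. *)
Lemma nondiscrete_nbhs0 U : ~ discrete_topological G -> nbhs 0 U ->
  exists2 y, U y & y <> 0.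
Proof.
move=> nondisc U0; apply: contrapT => noy; apply: nondisc => A.
rewrite openE => a Aa; rewrite /interior /=; apply: filterS (nbhs0_translate a U0) => x /= Uxa.
have : x - a = 0 by apply: contrapT => xa0; apply: noy; exists (x - a).
by move/eqP; rewrite subr_eq0 => /eqP ->.
Qed.

Lemma nbhs0_natmul_le U N : nbhs 0 U ->
  \forall x \near (0 : G), forall k, (k <= N)%N -> U (x *+ k).
Proof.
move=> U0; elim: N => [|N IH].
  by apply: filterE => x k; rewrite leqn0 => /eqP ->; rewrite mulr0n; apply: nbhs_singleton.
have UN : \forall x \near (0 : G), U (x *+ N.+1).
  by apply: natmul_continuous; rewrite mul0rn.
apply: filterS (filterI IH UN) => x [Ule UN1] k.
by rewrite leq_eqVlt => /orP [/eqP -> //|]; rewrite ltnS; apply: Ule.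
Qed.

Lemma nbhs0_half V : nbhs 0 V ->
  exists W, [/\ open W, W 0 & forall x z, W x -> W z -> V (x + z)].
Proof.
move=> V0; have [[A B] /= [A0 B0] sABV] : \forall p \near ((0 : G), (0 : G)), V (p.1 + p.2).
  by apply: add_continuous; rewrite /= addr0.
exists (A `&` B)°; split; [exact: open_interior | exact: filterI |].
by move=> x z /interior_subset [Ax _] /interior_subset [_ Bz]; apply: (sABV (x, z)).
Qed.

(* G with base point 0, to use the cover and intersection characterizations
   of compactness of the library, which are stated for pointed spaces. *)
Definition pointedG : Type := G.
HB.instance Definition _ := Topological.on pointedG.
HB.instance Definition _ := isPointed.Build pointedG (0 : G).

(* If V is compact and P an open subgroup, then for M large enough (beyond
   the number of cosets of P needed to cover V) any y whose first M multiples
   lie in V has a multiple dy in P with 0 < d <= M. *)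
Lemma compact_pigeonhole P V : is_subgroup P -> open P -> compact V ->
  \forall M \near \oo, forall y, (forall k, (k <= M)%N -> V (y *+ k)) ->
    exists2 d, (0 < d <= M)%N & P (y *+ d).
Proof.
move=> sP oP cV; have P0 : nbhs (0 : G) P by apply: open_nbhs_nbhs; split => //; case: sP.
pose coset (a : pointedG) := [set x : pointedG | P (x - a)].
have coset_open a : [set: pointedG] a -> open (coset a).
  move=> _; rewrite openE => x Pxa; rewrite /interior /=.
  apply: filterS (nbhs0_translate x P0) => z /= Pzx; rewrite /coset /=.
  have -> : z - a = (z - x) + (x - a) by rewrite addrA subrK.
  exact: subgroupD.
have V_cover : (V : set pointedG) `<=` cover [set: pointedG] coset.
  by move=> x _; exists x => //; rewrite /coset /= subrr; case: sP.
have cV' : cover_compact (V : set pointedG) by rewrite -compact_cover.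
have [D _ coverD] := cV' _ _ _ coset_open V_cover.
exists #|fset_sub_type D| => // M /= leM y Vy.
have /choice [f Pf] : forall k : 'I_M.+1, exists a : D, P (y *+ k - val a).
  by move=> k; have [a aD Pa] := coverD _ (Vy k (ltn_ord k)); exists (FSetSub aD).
have [i [j [lt_ij fij]]] := pigeonhole f leM.
exists (j - i)%N; first by rewrite subn_gt0 lt_ij (leq_trans (leq_subr _ _)) // -ltnS.
rewrite mulrnBr ?(ltnW lt_ij) //.
have -> : y *+ j - y *+ i = (y *+ j - val (f j)) - (y *+ i - val (f i)).
  by rewrite fij opprB addrA subrK.
exact: (proj2 sP).
Qed.

Lemma open_pure_orbit P V : torsion_free G -> open P -> pure_subgroup P -> compact V ->
  \forall M \near \oo, forall y, (forall k, (k <= M)%N -> V (y *+ k)) -> P y.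
Proof.
move=> tf oP pP cV; apply: filterS (compact_pigeonhole (proj1 pP) oP cV) => M PM y Vy.
by have [d /andP [d_gt0 _] Pyd] := PM y Vy; apply: pure_root_closed Pyd.
Qed.

Lemma bounded_orbit_OP V y : torsion_free G -> compact V ->
  (forall k, V (y *+ k)) -> OP_subgroup G y.
Proof.
move=> tf cV Vy P [oP pP]; have [M _ PM] := open_pure_orbit tf oP pP cV.
exact: (PM M (leqnn M) y (fun k _ => Vy k)).
Qed.

Section Shell.
Variables V W : set G.
Hypotheses (tf : torsion_free G) (nondisc : ~ discrete_topological G).
Hypotheses (cV : compact V) (clV : closed V) (oW : open W) (W0 : W 0).
Hypothesis WWV : forall x z, W x -> W z -> V (x + z).
Hypothesis no_bounded_orbit : ~ exists2 y, y <> 0 & forall k, V (y *+ k).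

Lemma shell_meets_finite_OP (D : {fset set G}) :
  {subset D <= [set P | open P /\ pure_subgroup P]} ->
  exists x, [/\ V x, ~ W x & forall P, P \in D -> P x].
Proof.
move=> D_open_pure.
have [N _ DN] : \forall M \near \oo, forall P, P \in D ->
    forall y, (forall k, (k <= M)%N -> V (y *+ k)) -> P y.
  apply: filterS (filter_bigI (F := nbhs \oo) _ _) => [M DM P PD|]; first exact: (DM P PD).
  by move=> P /D_open_pure /set_mem [oP pP]; apply: open_pure_orbit.
have W_nbhs0 : nbhs 0 W by apply: open_nbhs_nbhs.
have [y Wy y_neq0] := nondiscrete_nbhs0 nondisc (nbhs0_natmul_le N.+1 W_nbhs0).
have WV x : W x -> V x by move=> Wx; rewrite -[x]addr0; apply: WWV.
have [m [lt_Nm notWm Vle]] := first_exit WWV (ltn0Sn N) Wy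
  (fun Wall => no_bounded_orbit (ex_intro2 _ _ y y_neq0 (fun k => WV _ (Wall k)))).
exists (y *+ m); split => // [|P PD]; first exact: Vle.
have /set_mem [_ [sP _]] := D_open_pure _ PD.
by apply: subgroupMn => //; apply: (DN m (ltnW (ltnW lt_Nm))).
Qed.

(* By compactness of V \ W and closedness of open subgroups, G_op itself
   meets V \ W, in a point which is nonzero since 0 is in W. *)
Lemma shell_meets_OP : exists x, ~ W x /\ OP_subgroup G x.
Proof.
pose C : set pointedG := V `&` ~` W.
have cC : compact C.
  by apply: (subclosed_compact (closedI clV (open_closedC oW)) cV); apply: subIsetl.
move: cC; rewrite compact_In0 => /(_ _ [set P : set pointedG | open P /\ pure_subgroup P]
  (fun P => C `&` P)) [| D sD | x CPx].
- exists id => // P [oP [sP _]]; exact: open_subgroup_closed.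
- have [x [Vx notWx Px]] := shell_meets_finite_OP sD.
  by exists x => P PD; split; [split|apply: Px].
have setT_open_pure : open [set: G] /\ pure_subgroup [set: G].
  split; [exact: openT | split; [by split | by move=> n _; rewrite setTI]].
have [[_ notWx] _] := CPx _ setT_open_pure.
by exists x; split => // P PD; have [] := CPx _ PD.
Qed.

End Shell.

End TopologicalAbelianGroup.

Theorem theorem13 (G : topologicalZmodType) :
  LCA G -> ~ discrete_topological G -> torsion_free G ->
  OP_subgroup G <> [set 0].
Proof.
move=> [_ lcG] nondisc tf OP0.
have OP_eq0 x : OP_subgroup G x -> x = 0 by rewrite OP0.
have [V V0 [cV clV]] := compact_closed_nbhs (0 : G) lcG.
have [W [oW W0 WWV]] := nbhs0_half V0.
have [[y y_neq0 Vy]|no_bounded_orbit] := pselect (exists2 y : G, y <> 0 & forall k, V (y *+ k)).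
  exact: y_neq0 (OP_eq0 _ (bounded_orbit_OP tf cV Vy)).
have [x [notWx OPx]] := shell_meets_OP tf nondisc cV clV oW W0 WWV no_bounded_orbit.
by apply: notWx; rewrite (OP_eq0 _ OPx).
Qed.
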